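(* Let $\Delta_{1,1}=\{A=(a_{ij})\in SL_3(\mathfrak{o}) : a_{21}a_{32}-a_{22}a_{31}\neq0\}$. Then $$\Delta_{1,1}=\bigsqcup_{\substack{y_1,y_2,y_3\in Y(\mathfrak{o})\\ y_2,y_3\neq I_2}}\ \bigsqcup_{d\in D(3)}\ \bigsqcup_{u\in U(3)} \varphi_2(y_1^{-1})\,\varphi_1(y_2^{-1})\,\varphi_2(y_3^{-1})\,d\,u\,\Gamma_\infty(3),$$ i.e. $\Delta_{1,1}$ is the union of these sets and they are pairwise disjoint for distinct tuples $(y_1,y_2,y_3,d,u)$.
   Context: Let $\omega=e^{2\pi i/3}$, $\mathfrak{o}=\mathbb{Z}[\omega]$, $\mathfrak{o}^\times$ its unit group. Fix representatives of nonzero elements modulo units (''$c\in(\mathfrak{o}-\{0\})/\mathfrak{o}^\times$'') and, for each nonzero $c$, representatives of $\mathfrak{o}/c\mathfrak{o}$ (''$a\in\mathfrak{o}/c\mathfrak{o}$''). $Y(\mathfrak{o})=\{\begin{pmatrix}a&b\\c&d\end{pmatrix}\in SL_2(\mathfrak{o}) : c\in(\mathfrak{o}-\{0\})/\mathfrak{o}^\times,\ a\in\mathfrak{o}/c\mathfrak{o}\}\cup\{I_2\}$. $\Gamma(3)=\{A\in SL_3(\mathfrak{o}):A\equiv I_3\pmod{3\mathfrak{o}}\}$ (entrywise), $\Gamma_\infty(3)$ its subgroup of upper triangular unipotent matrices. $D(3)$: diagonal $\mathrm{diag}(i,j,k)$ with $i,j,k\in\mathfrak{o}$, $ijk=1$.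 $U(3)$: matrices $\begin{pmatrix}1&\alpha&\beta\\&1&\gamma\\&&1\end{pmatrix}$ with $\alpha,\beta,\gamma\in\{0,1,2\}+\{0,1,2\}\omega$. For $y=\begin{pmatrix}a&b\\c&d\end{pmatrix}\in SL_2(\mathfrak{o})$, $\varphi_1(y)=\begin{pmatrix}a&b&0\\c&d&0\\0&0&1\end{pmatrix}$, $\varphi_2(y)=\begin{pmatrix}1&0&0\\0&a&b\\0&c&d\end{pmatrix}$. *)

(* the Eisenstein integers o = Z[omega] realized inside algC. *)
From HB Require Import structures.
From mathcomp Require Import all_boot all_order all_algebra all_field.
Set Implicit Arguments. Unset Strict Implicit. Unset Printing Implicit Defensive.
Import Order.TTheory GRing.Theory Num.Theory.
Local Open Scope ring_scope.

(* omega = e^{2 pi i/3} = (-1 + i sqrt 3)/2 *)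
Definition omega : algC := (-1 + 'i * sqrtC 3) / 2.

Definition inO (x : algC) : Prop := exists a b : int, x = a%:~R + b%:~R * omega.

Definition unitO (x : algC) : Prop := inO x /\ x != 0 /\ inO x^-1.

Definition assocO (x y : algC) : Prop := exists u, unitO u /\ x = u * y.

Definition congO (c x y : algC) : Prop := exists k, inO k /\ x - y = k * c.

Definition reps_units (Rc : algC -> Prop) : Prop :=
  (forall c, Rc c -> inO c /\ c != 0) /\
  (forall x, inO x -> x != 0 -> exists c, Rc c /\ assocO x c /\
      forall c', Rc c' -> assocO x c' -> c' = c).

Definition reps_mod (Rc : algC -> Prop) (Ra : algC -> algC -> Prop) : Prop :=
  forall c, Rc c ->
    (forall a, Ra c a -> inO a) /\
    (forall x, inO x -> exists a, Ra c a /\ congO c x a /\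
        forall a', Ra c a' -> congO c x a' -> a' = a).

Definition o0 : 'I_3 := @Ordinal 3 0 isT.
Definition o1 : 'I_3 := @Ordinal 3 1 isT.
Definition o2 : 'I_3 := @Ordinal 3 2 isT.
Definition p0 : 'I_2 := @Ordinal 2 0 isT.
Definition p1 : 'I_2 := @Ordinal 2 1 isT.

Definition SLO (n : nat) (A : 'M[algC]_n) : Prop :=
  (forall i j, inO (A i j)) /\ \det A = 1.

Definition Yset (Rc : algC -> Prop) (Ra : algC -> algC -> Prop)
  (y : 'M[algC]_2) : Prop :=
  (SLO y /\ Rc (y p1 p0) /\ Ra (y p1 p0) (y p0 p0)) \/ y = 1%:M.

Definition D3 (d : 'M[algC]_3) : Prop :=
  exists i j k, inO i /\ inO j /\ inO k /\ i * j * k = 1 /\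
    d = diag_mx (\row_(l < 3) [:: i; j; k]`_l).

Definition digit3 (x : algC) : Prop :=
  exists a b : 'I_3, x = (a : nat)%:R + (b : nat)%:R * omega.

Definition U3 (u : 'M[algC]_3) : Prop :=
  exists al be ga, digit3 al /\ digit3 be /\ digit3 ga /\
    u = \matrix_(i < 3, j < 3)
          (if i == j then 1 else
           if (i == o0) && (j == o1) then al else
           if (i == o0) && (j == o2) then be else
           if (i == o1) && (j == o2) then ga else 0).

Definition Gamma3 (A : 'M[algC]_3) : Prop :=
  SLO A /\ forall i j : 'I_3, congO 3 (A i j) ((i == j)%:R).

Definition Gamma_inf3 (A : 'M[algC]_3) : Prop :=
  Gamma3 A /\ (forall i : 'I_3, A i i = 1) /\ (forall i j : 'I_3, (j < i)%N -> A i j = 0).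

Definition phi1 (y : 'M[algC]_2) : 'M[algC]_3 :=
  \matrix_(i < 3, j < 3)
    (if ((i < 2)%N && (j < 2)%N) then y (inord i) (inord j) else (i == j)%:R).

Definition phi2 (y : 'M[algC]_2) : 'M[algC]_3 :=
  \matrix_(i < 3, j < 3)
    (if ((0 < i)%N && (0 < j)%N) then y (inord i.-1) (inord j.-1) else (i == j)%:R).

Definition Delta11 (A : 'M[algC]_3) : Prop :=
  SLO A /\ A o1 o0 * A o2 o1 - A o1 o1 * A o2 o0 != 0.

Definition cell (y1 y2 y3 : 'M[algC]_2) (d u : 'M[algC]_3) (A : 'M[algC]_3) : Prop :=
  exists g, Gamma_inf3 g /\
    A = phi2 (invmx y1) *m phi1 (invmx y2) *m phi2 (invmx y3) *m d *m u *m g.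

Definition index_ok Rc Ra (y1 y2 y3 : 'M[algC]_2) (d u : 'M[algC]_3) : Prop :=
  Yset Rc Ra y1 /\ Yset Rc Ra y2 /\ Yset Rc Ra y3 /\
  y2 != 1%:M /\ y3 != 1%:M /\ D3 d /\ U3 u.

(* Left multiplication by phi2 y1, phi1 y2 and phi2 y3 clears the entries (3,1), (2,1)
   and (3,2) of A in turn.  Such y_i exist because o is norm-Euclidean: a column (p, q)
   is g times a coprime pair, and a coprime pair times a unit is, up to sign, the reversed
   bottom row of a matrix of SL_2(o), which can be normalised into Y(o).  They are unique
   because Y(o) is a system of representatives of B\SL_2(o), B the upper triangular
   subgroup.  On a cell the minor a21 a32 - a22 a31 is, up to units, the product of the
   lower left entries of y2 and y3, hence it is nonzero exactly when y2, y3 <> I.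
   Finally an upper triangular matrix of SL_3(o) factors uniquely as d u g by reducing
   its superdiagonal entries modulo 3. *)

From HB Require Import structures.
From mathcomp Require Import all_boot all_order all_algebra all_field.
From mathcomp Require Import ring zify.
Import Order.TTheory GRing.Theory Num.Theory.
Set Implicit Arguments.
Unset Strict Implicit.
Unset Printing Implicit Defensive.
Local Open Scope ring_scope.

(** * Arithmetic in o = Z[omega] *)

Lemma omega_sqr : omega ^+ 2 = - 1 - omega.
Proof.
have s3 : sqrtC 3 ^+ 2 = 3 :> algC by rewrite sqrtCK.
have i2 : 'i ^+ 2 = - 1 :> algC by rewrite sqrCi.
have -> : omega ^+ 2 = (1 - 2 * 'i * sqrtC 3 + 'i ^+ 2 * sqrtC 3 ^+ 2) / 4.
  by rewrite /omega; field.
by rewrite s3 i2 /omega; field.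
Qed.

Definition eis (a b : int) : algC := a%:~R + b%:~R * omega.

Lemma eis_add a b c d : eis a b + eis c d = eis (a + c) (b + d).
Proof. rewrite /eis !rmorphD /=; ring. Qed.

Lemma eis_opp a b : - eis a b = eis (- a) (- b).
Proof. rewrite /eis !rmorphN /=; ring. Qed.

Lemma eis_mul a b c d : eis a b * eis c d = eis (a * c - b * d) (a * d + b * c - b * d).
Proof.
apply/eqP; rewrite -subr_eq0; apply/eqP.
transitivity ((b * d)%:~R * (omega ^+ 2 - (- 1 - omega)) : algC).
  by rewrite /eis !(rmorphB, rmorphD, rmorphM) /=; ring.
by rewrite omega_sqr subrr mulr0.
Qed.

Lemma inO_eis a b : inO (eis a b).
Proof. by exists a, b. Qed.

Lemma inO_int (a : int) : inO a%:~R.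
Proof. by exists a, 0; rewrite mul0r addr0. Qed.

Lemma inO_nat (n : nat) : inO n%:R.
Proof. exact: inO_int n. Qed.

Lemma inO0 : inO 0. Proof. exact: inO_nat 0. Qed.
Lemma inO1 : inO 1. Proof. exact: inO_nat 1. Qed.

Lemma inO_omega : inO omega.
Proof. by exists 0, 1; rewrite mul1r add0r. Qed.

Lemma inOD x y : inO x -> inO y -> inO (x + y).
Proof.
by move=> [a [b ->]] [c [d ->]]; rewrite -/(eis a b) -/(eis c d) eis_add; exact: inO_eis.
Qed.

Lemma inON x : inO x -> inO (- x).
Proof. by move=> [a [b ->]]; rewrite -/(eis a b) eis_opp; exact: inO_eis. Qed.

Lemma inOB x y : inO x -> inO y -> inO (x - y).
Proof. by move=> Ox Oy; apply/inOD/inON. Qed.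

Lemma inOM x y : inO x -> inO y -> inO (x * y).
Proof.
by move=> [a [b ->]] [c [d ->]]; rewrite -/(eis a b) -/(eis c d) eis_mul; exact: inO_eis.
Qed.

Lemma inO_sum (I : finType) (F : I -> algC) : (forall i, inO (F i)) -> inO (\sum_i F i).
Proof. by move=> OF; apply: (big_ind inO) => //; [exact: inO0 | exact: inOD]. Qed.

Definition normO (a b : int) : int := a * a - a * b + b * b.

Lemma normO_ge0 a b : 0 <= normO a b.
Proof. rewrite /normO; nia. Qed.

Lemma normO_eq0 a b : normO a b = 0 -> a = 0 /\ b = 0.
Proof. rewrite /normO; nia. Qed.

(* The conjugate of a + b omega is a + b omega^2 = (a - b) - b omega. *)
Lemma eis_mul_conj a b : eis a b * eis (a - b) (- b) = (normO a b)%:~R.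
Proof.
rewrite eis_mul /eis.
have -> : a * - b + b * (a - b) - b * - b = 0 by ring.
by rewrite mul0r addr0 /normO; congr (_ %:~R); ring.
Qed.

Lemma eis_eq0 a b : eis a b = 0 -> a = 0 /\ b = 0.
Proof.
move=> ab0; apply: normO_eq0; apply/eqP.
by rewrite -(intr_eq0 algC) -eis_mul_conj ab0 mul0r.
Qed.

Lemma divz_round (m : int) {N : int} : 0 < N ->
  exists q e, m = q * N + e /\ - N <= 2 * e <= N.
Proof.
move=> N_gt0; have N2_gt0 : 0 < 2 * N by lia.
have := divz_eq (2 * m + N) (2 * N).
have := modz_ge0 (2 * m + N) (lt0r_neq0 N2_gt0); have := ltz_pmod (2 * m + N) N2_gt0.
set q := ((2 * m + N) %/ (2 * N))%Z; set r := ((2 * m + N) %% (2 * N))%Z.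
by move=> *; exists q, (m - q * N); split; [ring | lia].
Qed.

(* o is norm-Euclidean: x (a + b omega)^* = (x1 (a - b) + x2 b) + (x2 a - x1 b) omega,
   so round these coordinates divided by N to the nearest integers. *)
Lemma eis_euclid x a b : inO x -> 0 < normO a b ->
  exists k r s, [/\ inO k, x = k * eis a b + eis r s & normO r s < normO a b].
Proof.
move=> [x1 [x2 ->]] N_gt0; set N := normO a b in N_gt0 *.
have [q1 [e1 [E1 B1]]] := divz_round (x1 * (a - b) + x2 * b) N_gt0.
have [q2 [e2 [E2 B2]]] := divz_round (x2 * a - x1 * b) N_gt0.
set r := x1 - (q1 * a - q2 * b); set s := x2 - (q1 * b + q2 * a - q2 * b).
exists (eis q1 q2), r, s; split; first exact: inO_eis.
  by rewrite eis_mul eis_add /r /s; congr eis; ring.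
have C1 : e1 = r * (a - b) + s * b.
  have -> : e1 = x1 * (a - b) + x2 * b - q1 * N by rewrite E1; ring.
  by rewrite /r /s /N /normO; ring.
have C2 : e2 = s * a - r * b.
  have -> : e2 = x2 * a - x1 * b - q2 * N by rewrite E2; ring.
  by rewrite /r /s /N /normO; ring.
have normE : normO e1 e2 = normO r s * N by rewrite C1 C2 /N /normO; ring.
have : 4 * normO e1 e2 <= 3 * N * N by rewrite /normO; nia.
by have := normO_ge0 r s; rewrite normE; nia.
Qed.

Lemma eis00 : eis 0 0 = 0.
Proof. by rewrite /eis mulr0z mul0r addr0. Qed.

Definition bezout_spec (p q : algC) : Prop :=
  exists g s t p' q', [/\ inO g, inO s, inO t, inO p' & inO q'] /\
    [/\ g = s * p + t * q, p = g * p' & q = g * q'].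

Lemma bezout_spec0 p : inO p -> bezout_spec p 0.
Proof.
move=> Op; exists p, 1, 0, 1, 0.
split; first by split; [exact: Op | exact: inO1 | exact: inO0 | exact: inO1 | exact: inO0].
by split; rewrite ?mulr0 ?mulr1 // mul1r addr0.
Qed.

Lemma bezout p q : inO p -> inO q -> bezout_spec p q.
Proof.
move=> + [a [b ->]]; rewrite -/(eis a b).
move: {2}`|normO a b|%N (leqnn `|normO a b|%N) => n.
elim: n p a b => [|n IH] p a b le_n Op;
  have [/normO_eq0[-> ->]|N_neq0] := eqVneq (normO a b) 0;
  try by rewrite eis00; exact: bezout_spec0.
  by lia.
have N_gt0 : 0 < normO a b by have := normO_ge0 a b; lia.
have [k [r [s [Ok Ep lt_rs]]]] := eis_euclid Op N_gt0.
have le_rs : (`|normO r s| <= n)%N by have := normO_ge0 r s; lia.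
have [g [u [v [p' [q' [[Og Ou Ov Op' Oq'] [Eg Ea Er]]]]]]] := IH _ _ _ le_rs (inO_eis a b).
exists g, v, (u - v * k), (k * p' + q'), p'; split.
  by split=> //; [apply: inOB => //; apply: inOM | apply: inOD => //; apply: inOM].
by split; [rewrite Eg Ep; ring | rewrite Ep Ea Er; ring | exact: Ea].
Qed.

Lemma digit3_inO x : digit3 x -> inO x.
Proof. by move=> [a [b ->]]; apply/inOD/inOM/inO_omega; exact: inO_nat. Qed.

Lemma digit3_eis x : digit3 x -> exists a b : int, [/\ x = eis a b, 0 <= a < 3 & 0 <= b < 3].
Proof.
move=> [a [b ->]]; exists (a : nat)%:Z, (b : nat)%:Z; split; first by rewrite /eis !pmulrn.
  by have := ltn_ord a; lia.
by have := ltn_ord b; lia.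
Qed.

Lemma digit3_uniq x y : digit3 x -> digit3 y -> congO 3 x y -> x = y.
Proof.
move=> /digit3_eis[a [b [-> a3 b3]]] /digit3_eis[a' [b' [-> a3' b3']]] [_ [[c [d ->]] E]].
rewrite -/(eis c d) in E.
have : eis (a - a' - c * 3) (b - b' - d * 3) = eis a b - eis a' b' - eis c d * 3.
  by rewrite /eis !(rmorphB, rmorphM) /=; ring.
rewrite E subrr => /eis_eq0[ea eb].
by have [-> ->] : a = a' /\ b = b' by lia.
Qed.

Lemma digit3_exists x : inO x -> exists2 al, digit3 al & congO 3 x al.
Proof.
move=> [a [b ->]].
have mod3_lt (m : int) : (`|(m %% 3)%Z| < 3)%N by have := ltz_pmod m (isT : (0 < 3 :> int)); lia.
exists (eis (a %% 3)%Z (b %% 3)%Z).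
  exists (Ordinal (mod3_lt a)), (Ordinal (mod3_lt b)).
  by rewrite /eis /= !natr_absz !ger0_norm ?modz_ge0.
exists (eis (a %/ 3)%Z (b %/ 3)%Z); split; first exact: inO_eis.
by rewrite {1}(divz_eq a 3) {1}(divz_eq b 3) /eis !(rmorphD, rmorphM) /=; ring.
Qed.

(** * Matrices over o *)

Lemma ord2P (i : 'I_2) : i = p0 \/ i = p1.
Proof. by case: i => [[|[|//]] lti]; [left | right]; apply: val_inj. Qed.

Lemma ord3P (i : 'I_3) : [\/ i = o0, i = o1 | i = o2].
Proof.
by case: i => [[|[|[|//]]] lti]; [apply: Or31 | apply: Or32 | apply: Or33]; apply: val_inj.
Qed.

Lemma sum_ord2 (F : 'I_2 -> algC) : \sum_i F i = F p0 + F p1.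
Proof. by rewrite !big_ord_recl big_ord0 addr0; congr (F _ + F _); apply: val_inj. Qed.

Lemma sum_ord3 (F : 'I_3 -> algC) : \sum_i F i = F o0 + F o1 + F o2.
Proof. by rewrite !big_ord_recl big_ord0 addr0 addrA; congr (F _ + F _ + F _); apply: val_inj. Qed.

Lemma inord_p0 : inord 0 = p0. Proof. by apply: val_inj; rewrite /= inordK. Qed.
Lemma inord_p1 : inord 1 = p1. Proof. by apply: val_inj; rewrite /= inordK. Qed.

Ltac mx2_entries := apply/matrixP;
  do 2 (let k := fresh "k" in move=> k; case: (ord2P k) => ->);
  rewrite ?mxE ?sum_ord2 ?mxE /=.

Ltac mx3_entries := apply/matrixP;
  do 2 (let k := fresh "k" in move=> k; case: (ord3P k) => ->);
  rewrite !mxE ?sum_ord3 ?sum_ord2 ?mxE /= ?inord_p0 ?inord_p1.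

Lemma det2E (y : 'M[algC]_2) : \det y = y p0 p0 * y p1 p1 - y p0 p1 * y p1 p0.
Proof.
rewrite (expand_det_row _ p0) sum_ord2 /cofactor !det_mx11 !mxE /=.
have -> : lift p0 0 = p1 by apply: val_inj.
have -> : lift p1 0 = p0 by apply: val_inj.
by rewrite expr0 expr1; ring.
Qed.

Lemma det3E (X : 'M[algC]_3) : \det X =
  X o0 o0 * (X o1 o1 * X o2 o2 - X o1 o2 * X o2 o1)
  - X o0 o1 * (X o1 o0 * X o2 o2 - X o1 o2 * X o2 o0)
  + X o0 o2 * (X o1 o0 * X o2 o1 - X o1 o1 * X o2 o0).
Proof.
rewrite (expand_det_row _ o0) sum_ord3 /cofactor !det2E !mxE /=.
have -> : lift o0 p0 = o1 by apply: val_inj.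
have -> : lift o0 p1 = o2 by apply: val_inj.
have -> : lift o1 p0 = o0 by apply: val_inj.
have -> : lift o1 p1 = o2 by apply: val_inj.
have -> : lift o2 p0 = o0 by apply: val_inj.
have -> : lift o2 p1 = o1 by apply: val_inj.
by rewrite expr0 expr1 expr2; ring.
Qed.

Definition mx2 (a b c d : algC) : 'M[algC]_2 := \matrix_(i, j)
  if i == p0 then (if j == p0 then a else b) else (if j == p0 then c else d).

Lemma det_mx2 a b c d : \det (mx2 a b c d) = a * d - b * c.
Proof. by rewrite det2E !mxE. Qed.

Lemma phi1M x y : phi1 (x *m y) = phi1 x *m phi1 y.
Proof. by mx3_entries; ring. Qed.

Lemma phi2M x y : phi2 (x *m y) = phi2 x *m phi2 y.
Proof. by mx3_entries; ring. Qed.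

Lemma det_phi1 y : \det (phi1 y) = \det y.
Proof. by rewrite det3E det2E !mxE /= ?inord_p0 ?inord_p1; ring. Qed.

Lemma det_phi2 y : \det (phi2 y) = \det y.
Proof. by rewrite det3E det2E !mxE /= ?inord_p0 ?inord_p1; ring. Qed.

Lemma inO_SLO n (X : 'M[algC]_n) : SLO X -> forall i j, inO (X i j).
Proof. by case. Qed.

Lemma unitmx_SLO n (X : 'M[algC]_n) : SLO X -> X \in unitmx.
Proof. by case=> _ dX; rewrite unitmxE dX unitr1. Qed.

Lemma SLO_mulmx n (X Y : 'M[algC]_n) : SLO X -> SLO Y -> SLO (X *m Y).
Proof.
move=> [OX dX] [OY dY]; split; last by rewrite det_mulmx dX dY mulr1.
by move=> i j; rewrite mxE; apply: inO_sum => k; apply: inOM.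
Qed.

Lemma SLO_phi1 y : SLO y -> SLO (phi1 y).
Proof.
move=> [Oy dy]; split; last by rewrite det_phi1.
by move=> i j; rewrite mxE; case: ifP => _; [exact: Oy | exact: inO_nat].
Qed.

Lemma SLO_phi2 y : SLO y -> SLO (phi2 y).
Proof.
move=> [Oy dy]; split; last by rewrite det_phi2.
by move=> i j; rewrite mxE; case: ifP => _; [exact: Oy | exact: inO_nat].
Qed.

Lemma invmx_mx2 (y : 'M[algC]_2) :
  \det y = 1 -> invmx y = mx2 (y p1 p1) (- y p0 p1) (- y p1 p0) (y p0 p0).
Proof.
move=> dy; have uy : y \in unitmx by rewrite unitmxE dy unitr1.
have inv_l : mx2 (y p1 p1) (- y p0 p1) (- y p1 p0) (y p0 p0) *m y = 1%:M.
  by move: dy; rewrite det2E => dy; mx2_entries; rewrite -?dy; ring.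
by rewrite -[invmx y]mul1mx -inv_l mulmxK.
Qed.

Lemma SLO_invmx2 (y : 'M[algC]_2) : SLO y -> SLO (invmx y).
Proof.
move=> [Oy dy]; rewrite invmx_mx2 //; split; last by rewrite det_mx2 -dy det2E; ring.
move=> i j; case: (ord2P i) => ->; case: (ord2P j) => ->; rewrite !mxE /=.
  all: by [apply: Oy | apply/inON/Oy].
Qed.

Lemma phi1_1 : phi1 1%:M = 1%:M.
Proof. by mx3_entries. Qed.

Lemma phi2_1 : phi2 1%:M = 1%:M.
Proof. by mx3_entries. Qed.

Lemma phi1V y : SLO y -> phi1 (invmx y) = invmx (phi1 y).
Proof.
move=> Sy; have uy := unitmx_SLO (SLO_phi1 Sy).
by rewrite -[LHS]mulmx1 -(mulmxV uy) mulmxA -phi1M mulVmx ?unitmx_SLO // phi1_1 mul1mx.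
Qed.

Lemma phi2V y : SLO y -> phi2 (invmx y) = invmx (phi2 y).
Proof.
move=> Sy; have uy := unitmx_SLO (SLO_phi2 Sy).
by rewrite -[LHS]mulmx1 -(mulmxV uy) mulmxA -phi2M mulVmx ?unitmx_SLO // phi2_1 mul1mx.
Qed.

Section RowOperations.
Variables (M : 'M[algC]_2) (X : 'M[algC]_3) (c : 'I_3).

Lemma phi1_mul_r1 : (phi1 M *m X) o1 c = M p1 p0 * X o0 c + M p1 p1 * X o1 c.
Proof. by rewrite !mxE sum_ord3 !mxE /= inord_p0 inord_p1; ring. Qed.

Lemma phi1_mul_r2 : (phi1 M *m X) o2 c = X o2 c.
Proof. by rewrite !mxE sum_ord3 !mxE /=; ring. Qed.

Lemma phi2_mul_r0 : (phi2 M *m X) o0 c = X o0 c.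
Proof. by rewrite !mxE sum_ord3 !mxE /=; ring. Qed.

Lemma phi2_mul_r1 : (phi2 M *m X) o1 c = M p0 p0 * X o1 c + M p0 p1 * X o2 c.
Proof. by rewrite !mxE sum_ord3 !mxE /= inord_p0 inord_p1; ring. Qed.

Lemma phi2_mul_r2 : (phi2 M *m X) o2 c = M p1 p0 * X o1 c + M p1 p1 * X o2 c.
Proof. by rewrite !mxE sum_ord3 !mxE /= inord_p0 inord_p1; ring. Qed.

End RowOperations.

Definition lower_minor (X : 'M[algC]_3) : algC := X o1 o0 * X o2 o1 - X o1 o1 * X o2 o0.

Lemma lower_minor_phi2 y X : lower_minor (phi2 y *m X) = \det y * lower_minor X.
Proof. by rewrite /lower_minor !phi2_mul_r1 !phi2_mul_r2 det2E; ring. Qed.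

Definition upper3 (X : 'M[algC]_3) : Prop := [/\ X o1 o0 = 0, X o2 o0 = 0 & X o2 o1 = 0].

Lemma upper3M X Y : upper3 X -> upper3 Y -> upper3 (X *m Y).
Proof.
move=> [X10 X20 X21] [Y10 Y20 Y21].
by split; rewrite mxE sum_ord3 /= ?X10 ?X20 ?X21 ?Y10 ?Y20 ?Y21; ring.
Qed.

Lemma upper3_SLO_diag X : SLO X -> upper3 X -> X o0 o0 * X o1 o1 * X o2 o2 = 1.
Proof. by move=> [_ <-] [X10 X20 X21]; rewrite det3E X10 X20 X21; ring. Qed.

Lemma upper3_SLO_diag_neq0 X : SLO X -> upper3 X ->
  [/\ X o0 o0 != 0, X o1 o1 != 0 & X o2 o2 != 0].
Proof.
move=> SX uX; have := oner_neq0 algC.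
by rewrite -(upper3_SLO_diag SX uX) !mulf_eq0 !negb_or => /andP[/andP[-> ->] ->].
Qed.

Lemma SLO_1 n : SLO (1%:M : 'M[algC]_n).
Proof. by split=> [i j|]; rewrite ?det1 // mxE; exact: inO_nat. Qed.

(** * Upper triangular matrices: D(3), U(3) and Gamma_inf(3) *)

Definition ut (x y z : algC) : 'M[algC]_3 :=
  \matrix_(i < 3, j < 3)
    (if i == j then 1 else
     if (i == o0) && (j == o1) then x else
     if (i == o0) && (j == o2) then y else
     if (i == o1) && (j == o2) then z else 0).

Definition dg (a b c : algC) : 'M[algC]_3 := diag_mx (\row_(l < 3) [:: a; b; c]`_l).

Lemma ut_mul x y z x' y' z' :
  ut x y z *m ut x' y' z' = ut (x + x') (y + x * z' + y') (z + z').
Proof. by mx3_entries; ring. Qed.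

Lemma ut_inj x y z x' y' z' : ut x y z = ut x' y' z' -> [/\ x = x', y = y' & z = z'].
Proof.
move/matrixP=> E.
by split; [move: (E o0 o1) | move: (E o0 o2) | move: (E o1 o2)]; rewrite !mxE.
Qed.

Lemma dg_mulmx a b c (X : 'M[algC]_3) :
  dg a b c *m X = \matrix_(i, j) ([:: a; b; c]`_i * X i j).
Proof. by rewrite /dg mul_diag_mx; apply/matrixP => i j; rewrite !mxE. Qed.

Lemma det_dg a b c : \det (dg a b c) = a * b * c.
Proof. by rewrite /dg det_diag !big_ord_recl big_ord0 !mxE /= mulr1 mulrA. Qed.

Lemma SLO_ut x y z : inO x -> inO y -> inO z -> SLO (ut x y z).
Proof.
move=> Ox Oy Oz; split; last by rewrite det3E !mxE /=; ring.
by move=> i j; case: (ord3P i) => ->; case: (ord3P j) => ->; rewrite mxE /=;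
  by [exact: inO1 | exact: inO0 | ].
Qed.

Lemma SLO_dg a b c : inO a -> inO b -> inO c -> a * b * c = 1 -> SLO (dg a b c).
Proof.
move=> Oa Ob Oc abc; split; last by rewrite det_dg.
by move=> i j; case: (ord3P i) => ->; case: (ord3P j) => ->; rewrite !mxE /=;
  by [exact: inO0 | ].
Qed.

Lemma upper3_ut x y z : upper3 (ut x y z).
Proof. by split; rewrite mxE. Qed.

Lemma upper3_dg a b c : upper3 (dg a b c).
Proof. by split; rewrite !mxE /= mulr0n. Qed.

Lemma D3E d : D3 d ->
  exists i j k, [/\ inO i, inO j, inO k, i * j * k = 1 & d = dg i j k].
Proof. by move=> [i [j [k [Oi [Oj [Ok [ijk ->]]]]]]]; exists i, j, k. Qed.

Lemma U3E u : U3 u ->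
  exists al be ga, [/\ digit3 al, digit3 be, digit3 ga & u = ut al be ga].
Proof. by move=> [al [be [ga [Dal [Dbe [Dga ->]]]]]]; exists al, be, ga. Qed.

Lemma Gamma_inf3E g : Gamma_inf3 g <->
  exists a b c, [/\ inO a, inO b, inO c & g = ut (a * 3) (b * 3) (c * 3)].
Proof.
split=> [[[_ Cg] [Dg Lg]] | [a [b [c [Oa Ob Oc ->]]]]].
  move: (Cg o0 o1) (Cg o0 o2) (Cg o1 o2) => /= [a [Oa Ea]] [b [Ob Eb]] [c [Oc Ec]].
  rewrite !subr0 in Ea Eb Ec; exists a, b, c; split=> //.
  by apply/matrixP => i j; case: (ord3P i) => ->; case: (ord3P j) => ->;
    rewrite mxE /= ?Dg ?Ea ?Eb ?Ec // Lg.
have O3 : inO 3 by exact: inO_nat 3.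
have cong0 t : inO t -> congO 3 (t * 3) 0 by exists t; rewrite subr0.
have cong_refl t : congO 3 t t by exists 0; split; [exact: inO0 | rewrite subrr mul0r].
split; [split | split].
- by apply: SLO_ut; apply: inOM.
- by move=> i j; case: (ord3P i) => ->; case: (ord3P j) => ->; rewrite mxE /=; auto.
- by move=> i; rewrite mxE eqxx.
- by move=> i j; case: (ord3P i) => ->; case: (ord3P j) => ->; rewrite mxE.
Qed.

Lemma digit3_eq x x' k k' : digit3 x -> digit3 x' -> inO k -> inO k' ->
  x + k * 3 = x' + k' * 3 -> x = x'.
Proof.
move=> Dx Dx' Ok Ok' E; apply: digit3_uniq Dx Dx' _; exists (k' - k); split; first exact: inOB.
by rewrite -[x](addrK (k * 3)) E; ring.
Qed.

(* Since ut al be ga * ut 3a 3b 3c = ut (al + 3a) (be + 3 al c + 3b) (ga + 3c),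
   reduce x and z mod 3 first, then y - al (z - ga). *)
Lemma ut_U3_Gamma x y z : inO x -> inO y -> inO z ->
  exists u g, [/\ U3 u, Gamma_inf3 g & ut x y z = u *m g].
Proof.
move=> Ox Oy Oz.
have [al Dal [a [Oa Ea]]] := digit3_exists Ox.
have [ga Dga [c [Oc Ec]]] := digit3_exists Oz.
have Oy' : inO (y - al * (z - ga)).
  by apply/inOB/inOM => //; [exact: digit3_inO | apply/inOB/digit3_inO].
have [be Dbe [b [Ob Eb]]] := digit3_exists Oy'.
exists (ut al be ga), (ut (a * 3) (b * 3) (c * 3)); split.
- by exists al, be, ga.
- by apply/Gamma_inf3E; exists a, b, c.
- by rewrite ut_mul -Ea -Ec -Eb; congr ut; ring.
Qed.

Lemma U3_Gamma_uniq u u' g g' : U3 u -> U3 u' -> Gamma_inf3 g -> Gamma_inf3 g' ->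
  u *m g = u' *m g' -> u = u'.
Proof.
move=> /U3E[al [be [ga [Dal Dbe Dga ->]]]] /U3E[al' [be' [ga' [Dal' Dbe' Dga' ->]]]].
move=> /Gamma_inf3E[a [b [c [Oa Ob Oc ->]]]] /Gamma_inf3E[a' [b' [c' [Oa' Ob' Oc' ->]]]].
rewrite !ut_mul => /ut_inj[ex ey ez].
have eal := digit3_eq Dal Dal' Oa Oa' ex; have ega := digit3_eq Dga Dga' Oc Oc' ez.
subst al' ga'; have Oal := digit3_inO Dal.
suff -> : be = be' by [].
apply: (@digit3_eq _ _ (al * c + b) (al * c' + b')) Dbe Dbe' _ _ _.
- by apply/inOD/Ob/inOM.
- by apply/inOD/Ob'/inOM.
- by transitivity (be + al * (c * 3) + b * 3); [ring | rewrite ey; ring].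
Qed.

(* The diagonal entries are units: B o1 o1 * B o2 o2 is the inverse of B o0 o0, etc. *)
Lemma upper3_dg_ut B : SLO B -> upper3 B ->
  exists d x y z, [/\ D3 d, inO x, inO y & inO z] /\ B = d *m ut x y z.
Proof.
move=> SB uB; have OB := inO_SLO SB; have dB := upper3_SLO_diag SB uB.
case: uB => B10 B20 B21.
exists (dg (B o0 o0) (B o1 o1) (B o2 o2)), (B o0 o1 * (B o1 o1 * B o2 o2)),
  (B o0 o2 * (B o1 o1 * B o2 o2)), (B o1 o2 * (B o0 o0 * B o2 o2)).
split.
  split; try by repeat apply: inOM; apply: OB.
  by exists (B o0 o0), (B o1 o1), (B o2 o2); do !split; by [apply: OB | ].
rewrite dg_mulmx; mx3_entries; rewrite ?B10 ?B20 ?B21 ?mulr0 ?mulr1 //;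
  by rewrite -[LHS]mulr1 -dB; ring.
Qed.

Lemma dg_ut_inj d d' x y z x' y' z' : D3 d -> D3 d' ->
  d *m ut x y z = d' *m ut x' y' z' -> d = d' /\ ut x y z = ut x' y' z'.
Proof.
move=> /D3E[i [j [k [_ _ _ ijk ->]]]] /D3E[i' [j' [k' [_ _ _ _ ->]]]] E.
have diag_eq (r : 'I_3) : [:: i; j; k]`_r = [:: i'; j'; k']`_r.
  by move/matrixP: E => /(_ r r); rewrite !dg_mulmx !mxE eqxx !mulr1.
have dd : dg i j k = dg i' j' k' by congr diag_mx; apply/rowP => r; rewrite !mxE diag_eq.
have ud : dg i j k \in unitmx by rewrite unitmxE det_dg ijk unitr1.
by split=> //; move: E; rewrite -dd; apply: (can_inj (mulKmx ud)).
Qed.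

Lemma D3_U3_Gamma_uniq d d' u u' g g' : D3 d -> D3 d' -> U3 u -> U3 u' ->
  Gamma_inf3 g -> Gamma_inf3 g' -> d *m u *m g = d' *m u' *m g' -> d = d' /\ u = u'.
Proof.
have ut_of u0 g0 : U3 u0 -> Gamma_inf3 g0 -> exists x y z, u0 *m g0 = ut x y z.
  move=> /U3E[al [be [ga [_ _ _ ->]]]] /Gamma_inf3E[a [b [c [_ _ _ ->]]]].
  by rewrite ut_mul; do 3 eexists.
move=> Dd Dd' Uu Uu' Gg Gg'; rewrite -!mulmxA.
have [x [y [z Eug]]] := ut_of _ _ Uu Gg; have [x' [y' [z' Eug']]] := ut_of _ _ Uu' Gg'.
rewrite Eug Eug' => /(dg_ut_inj Dd Dd')[-> E]; split=> //.
by apply: U3_Gamma_uniq Uu Uu' Gg Gg' _; rewrite Eug Eug'.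
Qed.

Lemma D3_U3_Gamma_SLO_upper3 d u g : D3 d -> U3 u -> Gamma_inf3 g ->
  SLO (d *m u *m g) /\ upper3 (d *m u *m g).
Proof.
move=> /D3E[i [j [k [Oi Oj Ok ijk ->]]]] /U3E[al [be [ga [Dal Dbe Dga ->]]]].
move=> /Gamma_inf3E[a [b [c [Oa Ob Oc ->]]]]; have O3 : inO 3 by exact: inO_nat 3.
split; last by do 2?apply: upper3M; [exact: upper3_dg | exact: upper3_ut ..].
apply: SLO_mulmx; first apply: SLO_mulmx; first exact: SLO_dg.
  by apply: SLO_ut; exact: digit3_inO.
by apply: SLO_ut; apply: inOM.
Qed.

(** * The cells *)

Definition tower (y1 y2 y3 : 'M[algC]_2) (X : 'M[algC]_3) : 'M[algC]_3 :=
  phi2 (invmx y1) *m (phi1 (invmx y2) *m (phi2 (invmx y3) *m X)).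

Lemma cellE y1 y2 y3 d u A :
  cell y1 y2 y3 d u A <-> exists g, Gamma_inf3 g /\ A = tower y1 y2 y3 (d *m u *m g).
Proof. by split=> -[g [Gg ->]]; exists g; split; rewrite // /tower !mulmxA. Qed.

Lemma phi2_upper3_col0 w X : upper3 X ->
  [/\ (phi2 w *m X) o0 o0 = X o0 o0, (phi2 w *m X) o1 o0 = 0 & (phi2 w *m X) o2 o0 = 0].
Proof.
by case=> X10 X20 _; rewrite phi2_mul_r0 phi2_mul_r1 phi2_mul_r2 X10 X20 !mulr0 addr0.
Qed.

Lemma phi1_phi2_upper3_col0 z w X : upper3 X ->
  (phi1 z *m (phi2 w *m X)) o1 o0 = z p1 p0 * X o0 o0 /\
  (phi1 z *m (phi2 w *m X)) o2 o0 = 0.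
Proof.
move=> uX; have [C00 C10 C20] := phi2_upper3_col0 w uX.
by rewrite phi1_mul_r1 phi1_mul_r2 C00 C10 C20 mulr0 addr0.
Qed.

Lemma invmx2_10 (y : 'M[algC]_2) : SLO y -> invmx y p1 p0 = - y p1 p0.
Proof. by case=> _ dy; rewrite invmx_mx2 // mxE. Qed.

Lemma lower_minor_tower y1 y2 y3 X : SLO y1 -> SLO y2 -> SLO y3 -> upper3 X ->
  lower_minor (tower y1 y2 y3 X) = y2 p1 p0 * y3 p1 p0 * X o0 o0 * X o1 o1.
Proof.
move=> S1 S2 S3 uX; rewrite /tower lower_minor_phi2 (SLO_invmx2 S1).2 mul1r.
have [C10 C20] := phi1_phi2_upper3_col0 (invmx y2) (invmx y3) uX.
rewrite /lower_minor C10 C20 mulr0 subr0 phi1_mul_r2 phi2_mul_r2.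
by case: uX => _ _ ->; rewrite !invmx2_10 //; ring.
Qed.

Lemma SLO_tower y1 y2 y3 X :
  SLO y1 -> SLO y2 -> SLO y3 -> SLO X -> SLO (tower y1 y2 y3 X).
Proof.
move=> S1 S2 S3 SX; rewrite /tower.
by do !apply: SLO_mulmx => //;
  [apply/SLO_phi2/SLO_invmx2 | apply/SLO_phi1/SLO_invmx2 | apply/SLO_phi2/SLO_invmx2].
Qed.

Section Representatives.

Variables (Rc : algC -> Prop) (Ra : algC -> algC -> Prop).
Hypotheses (HRc : reps_units Rc) (HRa : reps_mod Rc Ra).

Lemma Rc_neq0 c : Rc c -> c != 0.
Proof. by case/(HRc.1 c). Qed.

Lemma Rc_assoc_uniq c c' : Rc c -> Rc c' -> assocO c' c -> c' = c.
Proof.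
move=> Rc_c Rc_c' assoc; have [Oc' c'_neq0] := HRc.1 _ Rc_c'.
have [c0 [_ [_ uniq0]]] := HRc.2 _ Oc' c'_neq0.
have unit1 : unitO 1 by split; [exact: inO1 | rewrite oner_neq0 invr1; split=> //; exact: inO1].
have assoc_refl : assocO c' c' by exists 1; rewrite mul1r.
by rewrite (uniq0 c' Rc_c' assoc_refl) (uniq0 c Rc_c assoc).
Qed.

Lemma Ra_cong_uniq c a a' : Rc c -> Ra c a -> Ra c a' -> congO c a' a -> a' = a.
Proof.
move=> Rc_c Ra_a Ra_a' cong; have [Ora uniqa] := HRa Rc_c.
have [a0 [_ [_ uniq0]]] := uniqa _ (Ora _ Ra_a').
have cong_refl : congO c a' a' by exists 0; split; [exact: inO0 | rewrite subrr mul0r].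
by rewrite (uniq0 a' Ra_a' cong_refl) (uniq0 a Ra_a cong).
Qed.

Lemma Yset_SLO y : Yset Rc Ra y -> SLO y.
Proof. by case=> [[]|->]; [|exact: SLO_1]. Qed.

Lemma Yset_neq1 y : Yset Rc Ra y -> y != 1%:M -> y p1 p0 != 0.
Proof. by case=> [[_ [/Rc_neq0 ? _]] _ | ->]; rewrite ?eqxx. Qed.

Lemma Yset_uniq y M : Yset Rc Ra y -> Yset Rc Ra (M *m y) -> SLO M -> M p1 p0 = 0 ->
  M *m y = y.
Proof.
move=> Yy YMy [OM]; rewrite det2E => dM M10; rewrite M10 mulr0 subr0 in dM.
have M11_neq0 : M p1 p1 != 0 by apply: contra_eq_neq dM => ->; rewrite mulr0 eq_sym oner_neq0.
have E10 : (M *m y) p1 p0 = M p1 p1 * y p1 p0 by rewrite mxE sum_ord2 M10 mul0r add0r.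
case: Yy => [[_ [Rc_c Ra_a]] | y1]; last first.
  case: YMy => [[_ [Rc' _]] | ]; last by rewrite y1 !mulmx1.
  by move: Rc'; rewrite E10 y1 mxE mulr0 => /Rc_neq0; rewrite eqxx.
have c_neq0 := Rc_neq0 Rc_c.
case: YMy => [[_ [Rc' Ra']] | My1]; last first.
  move/eqP: E10; rewrite My1 mxE /= eq_sym mulf_eq0.
  by rewrite (negbTE M11_neq0) (negbTE c_neq0).
rewrite E10 in Rc' Ra'.
have M11_1 : M p1 p1 = 1.
  have unit_M11 : unitO (M p1 p1).
    by split; [exact: OM | split=> //; rewrite -[_^-1]mul1r -dM mulfK //; exact: OM].
  have := Rc_assoc_uniq Rc_c Rc' (ex_intro _ _ (conj unit_M11 erefl)).
  by rewrite -[X in _ = X]mul1r => /(mulIf c_neq0).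
have M00_1 : M p0 p0 = 1 by rewrite -dM M11_1 mulr1.
have M01_0 : M p0 p1 = 0.
  have E00 : (M *m y) p0 p0 = y p0 p0 + M p0 p1 * y p1 p0 by rewrite mxE sum_ord2 M00_1 mul1r.
  rewrite M11_1 mul1r E00 in Ra'.
  have cong : congO (y p1 p0) (y p0 p0 + M p0 p1 * y p1 p0) (y p0 p0).
    by exists (M p0 p1); split; [exact: OM | rewrite addrAC subrr add0r].
  have E := Ra_cong_uniq Rc_c Ra_a Ra' cong.
  have /eqP : M p0 p1 * y p1 p0 = 0 by rewrite -(addKr (y p0 p0) (_ * _)) E addNr.
  by rewrite mulf_eq0 (negbTE c_neq0) orbF => /eqP.
suff -> : M = 1%:M by rewrite mul1mx.
by apply/matrixP => i j; case: (ord2P i) => ->; case: (ord2P j) => ->; rewrite mxE.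
Qed.

Lemma Yset_clear_coprime p q s t : inO p -> inO q -> inO s -> inO t ->
  s * p + t * q = 1 -> q != 0 ->
  exists y, [/\ Yset Rc Ra y, y p1 p0 * p + y p1 p1 * q = 0 & y != 1%:M].
Proof.
move=> Op Oq Os Ot spq q_neq0.
have [c [Rc_c [[mu [[Omu [mu_neq0 Omui]] Eq]] _]]] := HRc.2 _ Oq q_neq0.
have Oc := (HRc.1 _ Rc_c).1.
(* Bottom row (c, d) := (q, - p) / mu, top row (- s mu, - t mu) reduced modulo c. *)
pose d := - p * mu^-1.
have Od : inO d by apply/inOM/Omui/inON.
have Oa0 : inO (- s * mu) by apply/inOM/Omu/inON.
have [Ora uniqa] := HRa Rc_c.
have [a [Ra_a [[k [Ok Ek]] _]]] := uniqa _ Oa0.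
exists (mx2 a (- t * mu - k * d) c d); split.
- left; split; last by rewrite !mxE.
  split; last first.
    rewrite det_mx2 -spq Eq.
    have -> : a = - s * mu - k * c by rewrite -Ek; ring.
    by rewrite /d; field.
  move=> i j; case: (ord2P i) => ->; case: (ord2P j) => ->; rewrite !mxE //=.
  + exact: Ora.
  + by apply/inOB/inOM => //; apply/inOM/Omu/inON.
- by rewrite !mxE /= /d Eq; field.
- by move: (Rc_neq0 Rc_c); apply: contra_neq => /matrixP/(_ p1 p0); rewrite !mxE.
Qed.

Lemma Yset_clear_entry p q : inO p -> inO q ->
  exists y, [/\ Yset Rc Ra y, y p1 p0 * p + y p1 p1 * q = 0 & (q != 0 -> y != 1%:M)].
Proof.
move=> Op Oq; have [-> | q_neq0] := eqVneq q 0.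
  by exists 1%:M; split; [right | rewrite !mxE /= mul0r mulr0 addr0 | rewrite eqxx].
have [g [s [t [p' [q' [[Og Os Ot Op' Oq'] [Eg Ep Eq]]]]]]] := bezout Op Oq.
have g_neq0 : g != 0 by apply: contraNneq q_neq0 => g0; rewrite Eq g0 mul0r.
have q'_neq0 : q' != 0 by apply: contraNneq q_neq0 => q'0; rewrite Eq q'0 mulr0.
have coprime : s * p' + t * q' = 1.
  by apply: (mulfI g_neq0); rewrite mulr1 [RHS]Eg Ep Eq; ring.
have [y [Yy Ey y_neq1]] := Yset_clear_coprime Op' Oq' Os Ot coprime q'_neq0.
exists y; split=> //; rewrite Ep Eq.
by transitivity (g * (y p1 p0 * p' + y p1 p1 * q')); [ring | rewrite Ey mulr0].
Qed.

Lemma phi2_cancel (c : 'I_3) y y' C C' : Yset Rc Ra y -> Yset Rc Ra y' ->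
  phi2 (invmx y) *m C = phi2 (invmx y') *m C' ->
  C o2 c = 0 -> C' o2 c = 0 -> C o1 c != 0 -> y = y' /\ C = C'.
Proof.
move=> Yy Yy' E C2 C2' C1; have [Sy Sy'] := (Yset_SLO Yy, Yset_SLO Yy').
have u := unitmx_SLO (SLO_phi2 Sy).
pose M := y' *m invmx y.
have EM : phi2 M *m C = C'.
  by rewrite phi2M -mulmxA E phi2V // mulKVmx //; apply/unitmx_SLO/SLO_phi2.
have M10 : M p1 p0 = 0.
  move/(congr1 (fun X : 'M[algC]_3 => X o2 c))/eqP: EM; rewrite phi2_mul_r2 C2 C2' mulr0 addr0.
  by rewrite mulf_eq0 (negbTE C1) orbF => /eqP.
have My : M *m y = y' by rewrite /M mulmxKV // unitmx_SLO.
have YMy : Yset Rc Ra (M *m y) by rewrite My.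
have SM : SLO M by apply: SLO_mulmx Sy' (SLO_invmx2 Sy).
have yy' : y = y' by rewrite -My (Yset_uniq Yy YMy SM M10).
by split=> //; move: E; rewrite -yy' phi2V //; apply: (can_inj (mulKVmx u)).
Qed.

Lemma phi1_cancel (c : 'I_3) y y' C C' : Yset Rc Ra y -> Yset Rc Ra y' ->
  phi1 (invmx y) *m C = phi1 (invmx y') *m C' ->
  C o1 c = 0 -> C' o1 c = 0 -> C o0 c != 0 -> y = y' /\ C = C'.
Proof.
move=> Yy Yy' E C1 C1' C0; have [Sy Sy'] := (Yset_SLO Yy, Yset_SLO Yy').
have u := unitmx_SLO (SLO_phi1 Sy).
pose M := y' *m invmx y.
have EM : phi1 M *m C = C'.
  by rewrite phi1M -mulmxA E phi1V // mulKVmx //; apply/unitmx_SLO/SLO_phi1.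
have M10 : M p1 p0 = 0.
  move/(congr1 (fun X : 'M[algC]_3 => X o1 c))/eqP: EM; rewrite phi1_mul_r1 C1 C1' mulr0 addr0.
  by rewrite mulf_eq0 (negbTE C0) orbF => /eqP.
have My : M *m y = y' by rewrite /M mulmxKV // unitmx_SLO.
have YMy : Yset Rc Ra (M *m y) by rewrite My.
have SM : SLO M by apply: SLO_mulmx Sy' (SLO_invmx2 Sy).
have yy' : y = y' by rewrite -My (Yset_uniq Yy YMy SM M10).
by split=> //; move: E; rewrite -yy' phi1V //; apply: (can_inj (mulKVmx u)).
Qed.


Lemma tower_inj y1 y2 y3 y1' y2' y3' X X' :
  Yset Rc Ra y1 -> Yset Rc Ra y2 -> Yset Rc Ra y3 ->
  Yset Rc Ra y1' -> Yset Rc Ra y2' -> Yset Rc Ra y3' -> y2 != 1%:M ->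
  SLO X -> upper3 X -> upper3 X' ->
  tower y1 y2 y3 X = tower y1' y2' y3' X' -> [/\ y1 = y1', y2 = y2', y3 = y3' & X = X'].
Proof.
move=> Y1 Y2 Y3 Y1' Y2' Y3' y2_neq1 SX uX uX' E.
have [X00 X11 _] := upper3_SLO_diag_neq0 SX uX.
have [C10 C20] := phi1_phi2_upper3_col0 (invmx y2) (invmx y3) uX.
have [_ C20'] := phi1_phi2_upper3_col0 (invmx y2') (invmx y3') uX'.
have C10_neq0 : (phi1 (invmx y2) *m (phi2 (invmx y3) *m X)) o1 o0 != 0.
  rewrite C10 (invmx2_10 (Yset_SLO Y2)) mulNr oppr_eq0.
  exact: mulf_neq0 (Yset_neq1 Y2 y2_neq1) X00.
have [<- {}E] := phi2_cancel Y1 Y1' E C20 C20' C10_neq0.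
have [D00 D10 _] := phi2_upper3_col0 (invmx y3) uX.
have [_ D10' _] := phi2_upper3_col0 (invmx y3') uX'.
have D00_neq0 : (phi2 (invmx y3) *m X) o0 o0 != 0 by rewrite D00.
have [<- {}E] := phi1_cancel Y2 Y2' E D10 D10' D00_neq0.
case: uX uX' => _ _ X21 [_ _ X21'].
by have [<- <-] := phi2_cancel Y3 Y3' E X21 X21' X11.
Qed.

(* The pivots A1 o1 o0 and A2 o2 o1 are nonzero because their product is the lower minor,
   which left multiplication by phi2 y1 preserves. *)
Lemma Delta11_tower A : Delta11 A -> exists y1 y2 y3 B,
  [/\ Yset Rc Ra y1, Yset Rc Ra y2, Yset Rc Ra y3, y2 != 1%:M & y3 != 1%:M] /\
  [/\ SLO B, upper3 B & A = tower y1 y2 y3 B].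
Proof.
move=> [SA mA].
have [y1 [Y1 K1 _]] := Yset_clear_entry (inO_SLO SA o1 o0) (inO_SLO SA o2 o0).
have S1 := Yset_SLO Y1; pose A1 := phi2 y1 *m A.
have SA1 : SLO A1 by apply/SLO_mulmx/SA/SLO_phi2.
have A1_20 : A1 o2 o0 = 0 by rewrite phi2_mul_r2.
have mA1 : lower_minor A1 = lower_minor A by rewrite lower_minor_phi2 S1.2 mul1r.
have /andP[A1_10 A1_21] : (A1 o1 o0 != 0) && (A1 o2 o1 != 0).
  by move: mA; rewrite -/(lower_minor A) -mA1 /lower_minor A1_20 mulr0 subr0 mulf_eq0 negb_or.
have [y2 [Y2 K2 N2]] := Yset_clear_entry (inO_SLO SA1 o0 o0) (inO_SLO SA1 o1 o0).
have S2 := Yset_SLO Y2; pose A2 := phi1 y2 *m A1.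
have SA2 : SLO A2 by apply/SLO_mulmx/SA1/SLO_phi1.
have A2_10 : A2 o1 o0 = 0 by rewrite phi1_mul_r1.
have A2_20 : A2 o2 o0 = 0 by rewrite phi1_mul_r2.
have A2_21 : A2 o2 o1 != 0 by rewrite phi1_mul_r2.
have [y3 [Y3 K3 N3]] := Yset_clear_entry (inO_SLO SA2 o1 o1) (inO_SLO SA2 o2 o1).
have S3 := Yset_SLO Y3.
exists y1, y2, y3, (phi2 y3 *m A2); split; first by split=> //; [exact: N2 | exact: N3].
split.
- by apply/SLO_mulmx/SA2/SLO_phi2.
- by split; rewrite ?phi2_mul_r1 ?phi2_mul_r2 ?A2_10 ?A2_20 ?mulr0 ?addr0.
- have U1 := unitmx_SLO (SLO_phi2 S1); have U2 := unitmx_SLO (SLO_phi1 S2).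
  have U3 := unitmx_SLO (SLO_phi2 S3).
  by rewrite /tower /A2 /A1 !phi2V ?phi1V // !mulKmx.
Qed.

Lemma tower_Delta11 y1 y2 y3 X : Yset Rc Ra y1 -> Yset Rc Ra y2 -> Yset Rc Ra y3 ->
  y2 != 1%:M -> y3 != 1%:M -> SLO X -> upper3 X -> Delta11 (tower y1 y2 y3 X).
Proof.
move=> Y1 Y2 Y3 N2 N3 SX uX; have [[S1 S2] S3] := (Yset_SLO Y1, Yset_SLO Y2, Yset_SLO Y3).
split; first exact: SLO_tower.
have [X00 X11 _] := upper3_SLO_diag_neq0 SX uX.
by rewrite -/(lower_minor _) lower_minor_tower // !mulf_eq0 !negb_or X00 X11
  (Yset_neq1 Y2 N2) (Yset_neq1 Y3 N3).
Qed.

Lemma Delta11_cells A : Delta11 A <->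
  exists y1 y2 y3 d u, index_ok Rc Ra y1 y2 y3 d u /\ cell y1 y2 y3 d u A.
Proof.
split=> [/Delta11_tower[y1 [y2 [y3 [B [[Y1 Y2 Y3 N2 N3] [SB uB ->]]]]]] | ].
  have [d [x [y [z [[Dd Ox Oy Oz] ->]]]]] := upper3_dg_ut SB uB.
  have [u [g [Uu Gg ->]]] := ut_U3_Gamma Ox Oy Oz.
  exists y1, y2, y3, d, u; split; first by do 6 (split=> //).
  by apply/cellE; exists g; rewrite mulmxA.
move=> [y1 [y2 [y3 [d [u [[Y1 [Y2 [Y3 [N2 [N3 [Dd Uu]]]]]] /cellE[g [Gg ->]]]]]]]].
have [SX uX] := D3_U3_Gamma_SLO_upper3 Dd Uu Gg.
exact: tower_Delta11.
Qed.

Lemma cells_disjoint y1 y2 y3 d u y1' y2' y3' d' u' A :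
  index_ok Rc Ra y1 y2 y3 d u -> index_ok Rc Ra y1' y2' y3' d' u' ->
  cell y1 y2 y3 d u A -> cell y1' y2' y3' d' u' A ->
  [/\ y1 = y1', y2 = y2', y3 = y3', d = d' & u = u'].
Proof.
move=> [Y1 [Y2 [Y3 [N2 [_ [Dd Uu]]]]]] [Y1' [Y2' [Y3' [_ [_ [Dd' Uu']]]]]].
move=> /cellE[g [Gg ->]] /cellE[g' [Gg' E]].
have [SX uX] := D3_U3_Gamma_SLO_upper3 Dd Uu Gg.
have [_ uX'] := D3_U3_Gamma_SLO_upper3 Dd' Uu' Gg'.
have [<- <- <- EX] := tower_inj Y1 Y2 Y3 Y1' Y2' Y3' N2 SX uX uX' E.
by have [<- <-] := D3_U3_Gamma_uniq Dd Dd' Uu Uu' Gg Gg' EX.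
Qed.

End Representatives.

Theorem theorem2p16 (Rc : algC -> Prop) (Ra : algC -> algC -> Prop) :
  reps_units Rc -> reps_mod Rc Ra ->
  (forall A : 'M[algC]_3, Delta11 A <->
     exists y1 y2 y3 d u, index_ok Rc Ra y1 y2 y3 d u /\ cell y1 y2 y3 d u A) /\
  (forall y1 y2 y3 d u y1' y2' y3' d' u' (A : 'M[algC]_3),
     index_ok Rc Ra y1 y2 y3 d u -> index_ok Rc Ra y1' y2' y3' d' u' ->
     cell y1 y2 y3 d u A -> cell y1' y2' y3' d' u' A ->
     [/\ y1 = y1', y2 = y2', y3 = y3', d = d' & u = u']).
Proof.
by move=> HRc HRa; split=> [A | ]; [exact: Delta11_cells | exact: cells_disjoint].
Qed.
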